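(* Fix a program in the first-order functional language described in the context. For every expression $\pi{:}e$ of the program and every slicing criterion $\sigma$, $$L(G_\pi^\sigma)=L(G_\pi^{\{\epsilon\}})\,\sigma,$$ where $G_\pi^\sigma$ is the context-free demand grammar for program point $\pi$ under slicing criterion $\sigma$, and juxtaposition denotes concatenation of languages.
   Context: Programs. A program consists of first-order function definitions $(\mathtt{define}\ (f\ z_1\ \dots\ z_n)\ e_f)$ and a main expression $e_{\mathrm{main}}$, which is treated as the body of a parameterless function $\mathrm{main}$. Programs are in administrative normal form and all variable names are distinct. The grammar is $e ::= (\mathtt{if}\ x\ e_1\ e_2) \mid (\mathtt{let}\ x \leftarrow s\ \mathtt{in}\ e) \mid (\mathtt{return}\ x)$, $s ::= k \mid \mathtt{nil} \mid (\mathtt{cons}\ x_1\ x_2) \mid (\mathtt{car}\ x) \mid (\mathtt{cdr}\ x) \mid (\mathtt{null?}\ x) \mid (+\ x_1\ x_2) \mid (f\ x_1 \dots x_n)$. Every expression, every application and every variable occurrence carries a distinct label (program point) $\pi$, written $\pi{:}e$. Demands. Let $\Sigma=\{0,1,\bar 0,\bar 1,2\}$. A demand is a set of strings over $\Sigma$. For sets we write $\sigma_1\sigma_2=\{\alpha\beta\mid\alpha\in\sigma_1,\beta\in\sigma_2\}$ and $a\sigma=\{a\alpha\mid\alpha\in\sigma\}$. A slicing criterion is a prefix-closed set of strings over $\{0,1\}$, given by a regular grammar. Demand analysis. Maps from program points to demands are combined by pointwise union. For an application $\pi{:}s$ and a demand $\sigma$, $\mathcal A(s,\sigma)$ is: -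 for a constant $k$ or $\mathtt{nil}$: $\{\pi\mapsto\sigma\}$; - for $(\mathtt{null?}\ \pi_1{:}x)$: $\{\pi_1\mapsto 2\sigma,\ \pi\mapsto\sigma\}$; - for $(+\ \pi_1{:}x\ \pi_2{:}y)$: $\{\pi_1\mapsto 2\sigma,\ \pi_2\mapsto 2\sigma,\ \pi\mapsto\sigma\}$; - for $(\mathtt{car}\ \pi_1{:}x)$: $\{\pi_1\mapsto 2\sigma\cup 0\sigma,\ \pi\mapsto\sigma\}$; - for $(\mathtt{cdr}\ \pi_1{:}x)$: $\{\pi_1\mapsto 2\sigma\cup1\sigma,\ \pi\mapsto\sigma\}$; - for $(\mathtt{cons}\ \pi_1{:}x\ \pi_2{:}y)$: $\{\pi_1\mapsto\bar0\sigma,\ \pi_2\mapsto\bar1\sigma,\ \pi\mapsto\sigma\}$; - for $(f\ \pi_1{:}y_1\dots\pi_n{:}y_n)$: $\{\pi_i\mapsto L_f^i\sigma,\ \pi\mapsto\sigma\}$. For expressions, $\mathcal D$ is: - $\mathcal D(\pi{:}(\mathtt{return}\ \pi_1{:}x),\sigma)=\{\pi_1\mapsto\sigma,\pi\mapsto\sigma\}$; - $\mathcal D(\pi{:}(\mathtt{if}\ \pi_1{:}x\ e_1\ e_2),\sigma)=\mathcal D(e_1,\sigma)\cup\mathcal D(e_2,\sigma)\cup\{\pi_1\mapsto 2\sigma,\pi\mapsto\sigma\}$; - $\mathcal D(\pi{:}(\mathtt{let}\ x\leftarrow s\ \mathtt{in}\ e),\sigma)=\mathcal A(s,\bigcup_{\pi'}DE(\pi'))\cup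 DE\cup\{\pi\mapsto\sigma\}$, where $DE=\mathcal D(e,\sigma)$ and $\pi'$ ranges over the occurrences of $x$ in $e$. Function summaries. $L_f^i\subseteq\Sigma^*$ is required to satisfy, for every $\sigma$, that $L_f^i\sigma$ equals the union of $\mathcal D(e_f,\sigma)(\pi')$ over the occurrences $\pi'$ of $z_i$ in $e_f$; these requirements are computed with a symbolic placeholder for $\sigma$. The concrete demand on a function is $\sigma_{\mathrm{main}}=$ the slicing criterion, and for other $f$, $\sigma_f$ is the union of the demands on all call-site applications of $f$. The demand $D_\pi$ at a program point $\pi$ in the body of $f$ is $\mathcal D(e_f,\sigma_f)(\pi)$. All these equations, with one nonterminal for each $L_f^i$, each $\sigma_f$ and each $D_\pi$, and with $\sigma_{\mathrm{main}}$ producing the strings of the slicing criterion, form a context-free grammar over $\Sigma$ whose least solution defines these sets. $G_\pi^\sigma$ is this grammar with start symbol $D_\pi$ when the slicing criterion is $\sigma$, and $L(G_\pi^\sigma)$ is its language. The same construction is used for any set $\sigma$ of strings over $\{0,1\}$ in place of the criterion. *)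

From Stdlib Require List.
From mathcomp Require Import all_boot.
Set Implicit Arguments. Unset Strict Implicit. Unset Printing Implicit Defensive.

Inductive sym := S0 | S1 | S0b | S1b | S2.

Definition lang := seq sym -> Prop.

Definition lempty : lang := fun _ => False.
Definition leps : lang := fun w => w = [::].
Definition lunion (A B : lang) : lang := fun w => A w \/ B w.
Definition lpre (a : sym) (A : lang) : lang := fun w => exists v, w = a :: v /\ A v.
Definition lcat (A B : lang) : lang := fun w => exists u v, w = u ++ v /\ A u /\ B v.
Definition lsub (A B : lang) : Prop := forall w, A w -> B w.

Record vocc := VO { vlab : nat; vname : nat }.

(* applications s (their label is stored in the enclosing let) *)
Inductive app :=
 | AConst (k : nat)
 | ANil
 | ACons (x y : vocc)
 | ACar (x : vocc)
 | ACdr (x : vocc)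
 | ANull (x : vocc)
 | APlus (x y : vocc)
 | ACall (f : nat) (args : seq vocc).

(* expressions; ELet lab x slab s e is  lab:(let x <- slab:s in e) *)
Inductive expr :=
 | EIf (lab : nat) (x : vocc) (e1 e2 : expr)
 | ELet (lab : nat) (x : nat) (slab : nat) (s : app) (e : expr)
 | EReturn (lab : nat) (x : vocc).

Record fundef := FunDef { fname : nat; fparams : seq nat; fbody : expr }.
Record program := Program { pdefs : seq fundef; pmain : expr }.

(* all bodies, with the function they belong to (None = main) *)
Definition bodies (P : program) : seq (option nat * expr) :=
  (None, pmain P) :: [seq (Some (fname d), fbody d) | d <- pdefs P].

Definition app_vars (s : app) : seq vocc :=
  match s with
  | ACons a b | APlus a b => [:: a; b]
  | ACar a | ACdr a | ANull a => [:: a]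
  | ACall _ args => args
  | _ => [::]
  end.

Definition app_occs (x : nat) (s : app) : seq nat :=
  [seq vlab y | y <- app_vars s & vname y == x].

Fixpoint occs (x : nat) (e : expr) : seq nat :=
  match e with
  | EIf _ y e1 e2 => (if vname y == x then [:: vlab y] else [::]) ++ occs x e1 ++ occs x e2
  | ELet _ _ _ s e' => app_occs x s ++ occs x e'
  | EReturn _ y => if vname y == x then [:: vlab y] else [::]
  end.

(* call sites (called function, label of the application) *)
Fixpoint calls (e : expr) : seq (nat * nat) :=
  match e with
  | EIf _ _ e1 e2 => calls e1 ++ calls e2
  | ELet _ _ sl s e' => (if s is ACall f _ then [:: (f, sl)] else [::]) ++ calls e'
  | EReturn _ _ => [::]
  end.

Fixpoint all_labels (e : expr) : seq nat :=
  match e with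
  | EIf l y e1 e2 => l :: vlab y :: all_labels e1 ++ all_labels e2
  | ELet l _ sl s e' => l :: sl :: [seq vlab y | y <- app_vars s] ++ all_labels e'
  | EReturn l y => [:: l; vlab y]
  end.

Fixpoint expr_labels (e : expr) : seq nat :=
  match e with
  | EIf l _ e1 e2 => l :: expr_labels e1 ++ expr_labels e2
  | ELet l _ _ _ e' => l :: expr_labels e'
  | EReturn l _ => [:: l]
  end.

Fixpoint binders (e : expr) : seq nat :=
  match e with
  | EIf _ _ e1 e2 => binders e1 ++ binders e2
  | ELet _ x _ _ e' => x :: binders e'
  | EReturn _ _ => [::]
  end.

Definition prog_expr_labels (P : program) : seq nat :=
  flatten [seq expr_labels b.2 | b <- bodies P].

Definition wf_program (P : program) : Prop :=
  [/\ uniq (flatten [seq all_labels b.2 | b <- bodies P]),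
      uniq (flatten [seq fparams d ++ binders (fbody d) | d <- pdefs P]
              ++ binders (pmain P)) &
      uniq [seq fname d | d <- pdefs P]].

Definition dmap := nat -> lang.
Definition dempty : dmap := fun _ => lempty.
Definition dsingle (p : nat) (A : lang) : dmap := fun q w => q = p /\ A w.
Definition dunion (M N : dmap) : dmap := fun q => lunion (M q) (N q).

(* nonterminals of the demand grammar: L_f^i (i 0-based), sigma_f
   (None = main), D_pi *)
Inductive nonterm := NL (f i : nat) | NSig (g : option nat) | ND (p : nat).
Definition valuation := nonterm -> lang.

Fixpoint dargs (rho : valuation) (f i : nat) (args : seq vocc) (sg : lang) : dmap :=
  match args with
  | [::] => dempty
  | y :: ys => dunion (dsingle (vlab y) (lcat (rho (NL f i)) sg)) (dargs rho f i.+1 ys sg)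
  end.

Definition Aapp (rho : valuation) (pi : nat) (s : app) (sg : lang) : dmap :=
  dunion (dsingle pi sg)
  match s with
  | AConst _ | ANil => dempty
  | ANull y => dsingle (vlab y) (lpre S2 sg)
  | APlus y z => dunion (dsingle (vlab y) (lpre S2 sg)) (dsingle (vlab z) (lpre S2 sg))
  | ACar y => dsingle (vlab y) (lunion (lpre S2 sg) (lpre S0 sg))
  | ACdr y => dsingle (vlab y) (lunion (lpre S2 sg) (lpre S1 sg))
  | ACons y z => dunion (dsingle (vlab y) (lpre S0b sg)) (dsingle (vlab z) (lpre S1b sg))
  | ACall f args => dargs rho f 0 args sg
  end.

Definition occ_union (x : nat) (e : expr) (DE : dmap) : lang :=
  fun w => exists2 p, p \in occs x e & DE p w.

Fixpoint Dex (rho : valuation) (e : expr) (sg : lang) : dmap :=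
  match e with
  | EReturn pi y => dunion (dsingle (vlab y) sg) (dsingle pi sg)
  | EIf pi y e1 e2 =>
      dunion (dunion (Dex rho e1 sg) (Dex rho e2 sg))
             (dunion (dsingle (vlab y) (lpre S2 sg)) (dsingle pi sg))
  | ELet pi x sl s e' =>
      let DE := Dex rho e' sg in
      dunion (Aapp rho sl s (occ_union x e' DE)) (dunion DE (dsingle pi sg))
  end.

(* The equations for L_f^i are those computed with a symbolic placeholder for
   sigma, the placeholder being instantiated by {epsilon}. *)
Definition is_solution (P : program) (crit : lang) (rho : valuation) : Prop :=
  [/\ (forall d, List.In d (pdefs P) -> forall i, i < size (fparams d) ->
        forall p, p \in occs (nth 0 (fparams d) i) (fbody d) ->
          lsub (Dex rho (fbody d) leps p) (rho (NL (fname d) i))),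
      lsub crit (rho (NSig None)),
      (forall g e, List.In (g, e) (bodies P) -> forall f sl, (f, sl) \in calls e ->
          lsub (rho (ND sl)) (rho (NSig (Some f)))) &
      (forall g e, List.In (g, e) (bodies P) -> forall p,
          lsub (Dex rho e (rho (NSig g)) p) (rho (ND p)))].

(* least solution = language L(G_n^crit) of the grammar with start symbol n *)
Definition Lsol (P : program) (crit : lang) (n : nonterm) : lang :=
  fun w => forall rho, is_solution P crit rho -> rho n w.

Definition is01 (a : sym) : bool := if a is S0 then true else if a is S1 then true else false.

Definition is_regular (A : lang) : Prop :=
  exists (Q : finType) (q0 : Q) (delta : Q -> sym -> Q) (acc : pred Q),
    forall w, A w <-> acc (foldl delta q0 w).

Definition slicing_criterion (A : lang) : Prop :=
  [/\ forall w, A w -> all is01 w,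
      forall u v, A (u ++ v) -> A u &
      is_regular A].

(* Every clause of the demand analysis only prefixes its demand sigma, by a
   symbol of Sigma or by a summary L_f^i, and takes unions; hence
   D(e, sigma C) = D(e, sigma) C for every language C.  Consequently, appending
   C to the sigma_f and D_pi components of a solution of the grammar for a
   criterion sigma0 yields a solution for sigma0 C, and conversely the right
   quotient by C of a solution for sigma0 C is a solution for sigma0.  Comparing
   least solutions gives L(G^(sigma0 C)) = L(G^sigma0) C, and the theorem is the
   case sigma0 = {epsilon}. *)

From mathcomp Require Import all_boot.
Set Implicit Arguments. Unset Strict Implicit. Unset Printing Implicit Defensive.

Definition lquot (A C : lang) : lang := fun u => forall v, C v -> A (u ++ v).

Lemma lcatA (A B C : lang) w : lcat (lcat A B) C w <-> lcat A (lcat B C) w.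
Proof.
split.
- move=> [_ [v [-> [[a [b [-> [Ha Hb]]]] Hv]]]].
  by exists a, (b ++ v); rewrite catA; split=> //; split=> //; exists b, v.
- move=> [u [_ [-> [Hu [a [b [-> [Ha Hb]]]]]]]].
  by exists (u ++ a), b; rewrite catA; split=> //; split=> //; exists u, a.
Qed.

Lemma lcat0l (C : lang) w : lcat leps C w <-> C w.
Proof. by split=> [[_ [v [-> [-> Hv]]]] | Hw] //; exists [::], w. Qed.

Lemma lcat_mono (A A' B B' : lang) :
  lsub A A' -> lsub B B' -> lsub (lcat A B) (lcat A' B').
Proof. by move=> HA HB _ [u [v [-> [Hu Hv]]]]; exists u, v; auto. Qed.

Lemma lpre_mono a (A A' : lang) : lsub A A' -> lsub (lpre a A) (lpre a A').
Proof. by move=> HA _ [v [-> Hv]]; exists v; auto. Qed.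

Lemma lquot_mono (A A' C : lang) : lsub A A' -> lsub (lquot A C) (lquot A' C).
Proof. by move=> HA u Hu v Hv; apply/HA/Hu. Qed.

Lemma lcat_sub_quot (A B C : lang) : lsub (lcat B C) A <-> lsub B (lquot A C).
Proof.
split=> [H u Hu v Hv | H _ [u [v [-> [Hu Hv]]]]]; last exact: H.
by apply: H; exists u, v.
Qed.

Definition right_linear (T : lang -> lang) : Prop :=
  forall A B w, T (lcat A B) w <-> lcat (T A) B w.

Definition lmonotone (T : lang -> lang) : Prop :=
  forall A A', lsub A A' -> lsub (T A) (T A').

Lemma right_linear_id : right_linear (fun A => A).
Proof. by []. Qed.

Lemma right_linear_dempty q : right_linear (fun A => dempty q).
Proof. by move=> A B w; split=> // [[u [v [_ []]]]]. Qed.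

Lemma right_linear_lpre a T : right_linear T -> right_linear (fun A => lpre a (T A)).
Proof.
move=> HT A B w; split.
- move=> [_ [-> /HT [u [v [-> [Hu Hv]]]]]].
  by exists (a :: u), v; split=> //; split=> //; exists u.
- move=> [_ [v [-> [[u [-> Hu]] Hv]]]].
  by exists (u ++ v); split=> //; apply/HT; exists u, v.
Qed.

Lemma right_linear_lcat L T : right_linear T -> right_linear (fun A => lcat L (T A)).
Proof.
move=> HT A B w; rewrite lcatA; split; apply: lcat_mono => // v; first by move/HT.
by move=> Hv; apply/HT.
Qed.

Lemma right_linear_lunion T1 T2 :
  right_linear T1 -> right_linear T2 -> right_linear (fun A => lunion (T1 A) (T2 A)).
Proof.
move=> H1 H2 A B w; split.
- by case=> [/H1|/H2] [u [v [-> [Hu Hv]]]]; exists u, v; do ![split=> //]; [left|right].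
- by move=> [u [v [-> [[Hu|Hu] Hv]]]]; [left; apply/H1|right; apply/H2]; exists u, v.
Qed.

Lemma right_linear_dsingle p q T :
  right_linear T -> right_linear (fun A => dsingle p (T A) q).
Proof.
move=> HT A B w; split.
- by move=> [-> /HT [u [v [-> [Hu Hv]]]]]; exists u, v.
- by move=> [u [v [-> [[-> Hu] Hv]]]]; split=> //; apply/HT; exists u, v.
Qed.

Lemma right_linear_dunion (F G : lang -> dmap) q :
  right_linear (fun A => F A q) -> right_linear (fun A => G A q) ->
  right_linear (fun A => dunion (F A) (G A) q).
Proof. exact: right_linear_lunion. Qed.

Lemma right_linear_comp T U :
  lmonotone T -> right_linear T -> right_linear U -> right_linear (fun A => T (U A)).
Proof.
move=> monoT HT HU A B w; rewrite -HT.
by split; apply: monoT => v /HU.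
Qed.

Lemma right_linear_occ_union x e (F : lang -> dmap) :
  (forall p, right_linear (fun A => F A p)) ->
  right_linear (fun A => occ_union x e (F A)).
Proof.
move=> HF A B w; split.
- by move=> [p Hp /HF [u [v [-> [Hu Hv]]]]]; exists u, v; do ![split=> //]; exists p.
- by move=> [u [v [-> [[p Hp Hu] Hv]]]]; exists p => //; apply/HF; exists u, v.
Qed.

Definition sub_summaries (r1 r2 : valuation) : Prop :=
  forall f i, lsub (r1 (NL f i)) (r2 (NL f i)).

Section Monotonicity.
Variables (r1 r2 : valuation).
Hypothesis r12 : sub_summaries r1 r2.

Lemma dargs_mono A A' args f i q :
  lsub A A' -> lsub (dargs r1 f i args A q) (dargs r2 f i args A' q).
Proof.
move=> HA; elim: args i => [|y ys IH] i w //= [[-> Hw]|Hw].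
  by left; split=> //; apply: lcat_mono Hw.
by right; apply: IH.
Qed.

Lemma Aapp_mono pi s A A' q :
  lsub A A' -> lsub (Aapp r1 pi s A q) (Aapp r2 pi s A' q).
Proof.
move=> HA w [[-> Hw]|Hw]; first by left; split=> //; apply: HA.
have Hpre a : lsub (lpre a A) (lpre a A') by apply: lpre_mono.
right; case: s Hw => [k||y z|y|y|y|y z|f args] //=.
- by case=> [[-> /Hpre Hw]|[-> /Hpre Hw]]; [left|right].
- by case=> -> [/Hpre Hw|/Hpre Hw]; split=> //; [left|right].
- by case=> -> [/Hpre Hw|/Hpre Hw]; split=> //; [left|right].
- by case=> -> /Hpre.
- by case=> [[-> /Hpre Hw]|[-> /Hpre Hw]]; [left|right].
- exact: dargs_mono.
Qed.

Lemma Dex_mono e A A' q : lsub A A' -> lsub (Dex r1 e A q) (Dex r2 e A' q).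
Proof.
elim: e A A' q => [l y e1 IH1 e2 IH2|l x sl s e IH|l y] A A' q HA w /=.
- case=> [[Hw|Hw]|[[-> Hw]|[-> Hw]]].
  + by left; left; apply: IH1 Hw.
  + by left; right; apply: IH2 Hw.
  + by right; left; split=> //; apply: lpre_mono Hw.
  + by right; right; split=> //; apply: HA.
- case=> [Hw|[Hw|[-> Hw]]].
  + left; apply: Aapp_mono Hw => v [p Hp Hv].
    by exists p => //; apply: IH Hv.
  + by right; left; apply: IH Hw.
  + by right; right; split=> //; apply: HA.
- by case=> [[-> Hw]|[-> Hw]]; [left|right]; split=> //; apply: HA.
Qed.

End Monotonicity.

Lemma sub_summaries_refl r : sub_summaries r r.
Proof. by move=> f i. Qed.

Section Linearity.
Variable rho : valuation.

Hint Resolve right_linear_id right_linear_dempty right_linear_lpre right_linear_lcat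
  right_linear_lunion right_linear_dsingle right_linear_dunion : right_linear.

Lemma dargs_right_linear f i args q : right_linear (fun A => dargs rho f i args A q).
Proof. by elim: args i => [|y ys IH] i /=; auto with right_linear. Qed.

Hint Resolve dargs_right_linear : right_linear.

Lemma Aapp_right_linear pi s q : right_linear (fun A => Aapp rho pi s A q).
Proof. by apply: right_linear_dunion; case: s => /=; auto with right_linear. Qed.

Lemma Dex_right_linear e q : right_linear (fun A => Dex rho e A q).
Proof.
elim: e q => [l y e1 IH1 e2 IH2|l x sl s e IH|l y] q /=; auto with right_linear.
apply: right_linear_dunion; last by auto with right_linear.
apply: right_linear_comp (Aapp_right_linear _ _ _) (right_linear_occ_union _ _ IH).
by move=> A A'; apply: Aapp_mono; apply: sub_summaries_refl.
Qed.

End Linearity.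

Section Solutions.
Variable P : program.

Lemma Lsol_least crit rho n : is_solution P crit rho -> lsub (Lsol P crit n) (rho n).
Proof. by move=> Hrho w; apply. Qed.

Lemma Lsol_solution crit : is_solution P crit (Lsol P crit).
Proof.
split=> [d Hd i Hi p Hp | | g e Hge f sl Hc | g e Hge p] w Hw rho Hrho;
  have least n := Lsol_least (n:=n) Hrho;
  case: Hrho => [HL Hcrit Hcall HD].
- by apply: (HL d Hd i Hi p Hp); move: Hw; apply: Dex_mono => // f j; apply: least.
- exact: Hcrit.
- exact/(Hcall g e Hge f sl Hc)/least.
- by apply: (HD g e Hge p); move: Hw; apply: Dex_mono => [f j|]; apply: least.
Qed.

Lemma is_solution_antimono crit crit' rho :
  lsub crit' crit -> is_solution P crit rho -> is_solution P crit' rho.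
Proof. by move=> Hc [HL Hcrit Hcall HD]; split=> // w /Hc /Hcrit. Qed.

Lemma Lsol_mono crit crit' n : lsub crit crit' -> lsub (Lsol P crit n) (Lsol P crit' n).
Proof. by move=> Hc w Hw rho /(is_solution_antimono Hc); apply: Hw. Qed.

(* The summaries L_f^i are left unchanged: their equations use the placeholder
   {epsilon}, not the criterion. *)
Definition valuation_map (F : lang -> lang) (rho : valuation) : valuation :=
  fun n => if n is NL _ _ then rho n else F (rho n).

Lemma valuation_map_summaries F rho : sub_summaries (valuation_map F rho) rho.
Proof. by move=> f i. Qed.

Lemma is_solution_lcat crit C rho :
  is_solution P crit rho -> is_solution P (lcat crit C) (valuation_map (lcat^~ C) rho).
Proof.
case=> HL Hcrit Hcall HD; split.
- move=> d Hd i Hi p Hp w Hw; apply: (HL d Hd i Hi p Hp).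
  by move: Hw; apply: Dex_mono => //; apply: valuation_map_summaries.
- exact: lcat_mono.
- by move=> g e Hge f sl Hc; apply: lcat_mono => //; exact: (Hcall g e Hge f sl Hc).
- move=> g e Hge p w /Dex_right_linear Hw.
  apply: lcat_mono Hw => // v Hv; apply: (HD g e Hge p).
  by move: Hv; apply: Dex_mono => //; apply: valuation_map_summaries.
Qed.

Lemma is_solution_lquot crit C rho :
  is_solution P (lcat crit C) rho -> is_solution P crit (valuation_map (lquot^~ C) rho).
Proof.
case=> HL Hcrit Hcall HD; split.
- move=> d Hd i Hi p Hp w Hw; apply: (HL d Hd i Hi p Hp).
  by move: Hw; apply: Dex_mono => //; apply: valuation_map_summaries.
- exact/lcat_sub_quot.
- by move=> g e Hge f sl Hc; apply: lquot_mono; exact: (Hcall g e Hge f sl Hc).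
- move=> g e Hge p; apply/lcat_sub_quot => w /Dex_right_linear Hw.
  apply: (HD g e Hge p); move: Hw; apply: Dex_mono; first exact: valuation_map_summaries.
  exact/lcat_sub_quot.
Qed.

Lemma Lsol_lcat crit C p w :
  Lsol P (lcat crit C) (ND p) w <-> lcat (Lsol P crit (ND p)) C w.
Proof.
split=> [Hw | ].
- exact: Hw _ (is_solution_lcat C (Lsol_solution crit)).
- move=> Hw rho /is_solution_lquot Hrho.
  by move: (Lsol_least (n := ND p) Hrho) => /lcat_sub_quot; apply.
Qed.

End Solutions.

Theorem mainTheorem2 (P : program) (Hwf : wf_program P) (crit : lang)
  (Hcrit : slicing_criterion crit) (pi : nat) (Hpi : pi \in prog_expr_labels P) :
  forall w, Lsol P crit (ND pi) w <-> lcat (Lsol P leps (ND pi)) crit w.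
Proof.
move=> w; rewrite -Lsol_lcat.
by split; apply: Lsol_mono => v /lcat0l.
Qed.
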